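(* Let $n\ge1$. Every $n$-normal operator $T\in\mathcal{L}(\mathcal{H})$ with closed range is $n$-EP.
   Context: $\mathcal{H}$ is a Hilbert space, $\mathcal{L}(\mathcal{H})$ the bounded operators on it. $T$ is $n$-normal if $T^nT^*=T^*T^n$. For $T$ with closed range, $T^\dagger$ is its Moore–Penrose inverse (unique solution of $TT^\dagger T=T$, $T^\dagger TT^\dagger=T^\dagger$, $(T^\dagger T)^*=T^\dagger T$, $(TT^\dagger)^*=TT^\dagger$). $T$ is $n$-EP if $T$ has closed range and $T^nT^\dagger=T^\dagger T^n$. *)

From HB Require Import structures.
From mathcomp Require Import all_boot all_order all_algebra.
From mathcomp Require Import complex.
From mathcomp Require Import reals.
Set Implicit Arguments. Unset Strict Implicit. Unset Printing Implicit Defensive.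
Import Order.TTheory GRing.Theory Num.Theory.
Local Open Scope ring_scope.

Section Hilbert.
Variables (R : realType) (H : lmodType R[i]) (ip : H -> H -> R[i]).

Definition inner_product_axioms : Prop :=
  [/\ (forall (a : R[i]) (x y z : H), ip (a *: x + y) z = a * ip x z + ip y z),
      (forall x y : H, ip x y = (ip y x)^*),
      (forall x : H, 0 <= ip x x) &
      (forall x : H, ip x x = 0 -> x = 0)].

Definition hnorm (x : H) : R := Num.sqrt (complex.Re (ip x x)).

Definition hcvg (u : nat -> H) (l : H) : Prop :=
  forall e : R, 0 < e -> exists N : nat, forall k, (N <= k)%N -> hnorm (u k - l) < e.

Definition hcauchy (u : nat -> H) : Prop :=
  forall e : R, 0 < e -> exists N : nat,
    forall k m, (N <= k)%N -> (N <= m)%N -> hnorm (u k - u m) < e.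

Definition is_hilbert : Prop :=
  inner_product_axioms /\ (forall u, hcauchy u -> exists l, hcvg u l).

Definition bounded_op (T : H -> H) : Prop :=
  (forall (a : R[i]) (x y : H), T (a *: x + y) = a *: T x + T y) /\
  (exists M : R, forall x, hnorm (T x) <= M * hnorm x).

Definition is_adjoint (T Ts : H -> H) : Prop :=
  bounded_op Ts /\ forall x y, ip (T x) y = ip x (Ts y).

Definition selfadjoint (P : H -> H) : Prop :=
  forall x y, ip (P x) y = ip x (P y).

Definition closed_range (T : H -> H) : Prop :=
  forall (u : nat -> H) (y : H), hcvg (fun k => T (u k)) y -> exists x, T x = y.

Definition is_MP_inverse (T S : H -> H) : Prop :=
  [/\ bounded_op S,
      T \o S \o T =1 T,
      S \o T \o S =1 S,
      selfadjoint (S \o T) &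
      selfadjoint (T \o S)].

Definition opow (T : H -> H) (n : nat) : H -> H := iter n T.

(* T is n-normal: T^n T^* = T^* T^n (Ts is the adjoint of T) *)
Definition n_normal (n : nat) (T Ts : H -> H) : Prop :=
  opow T n \o Ts =1 Ts \o opow T n.

(* T is n-EP: closed range and T^n T^+ = T^+ T^n, T^+ the (unique)
   Moore--Penrose inverse *)
Definition n_EP (n : nat) (T : H -> H) : Prop :=
  closed_range T /\
  forall S, is_MP_inverse T S -> opow T n \o S =1 S \o opow T n.

End Hilbert.

From HB Require Import structures.
From mathcomp Require Import all_boot all_order all_algebra.
From mathcomp Require Import complex.
From mathcomp Require Import reals.
Set Implicit Arguments. Unset Strict Implicit. Unset Printing Implicit Defensive.
Import GRing.Theory.
Local Open Scope ring_scope.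

(** Write [A = T^n] and [B = T*^n], so that [B] is the adjoint of [A].  [A]
    commutes with [T], and taking adjoints in [A T* = T* A] shows that [B]
    commutes with [T] too.  Hence [A] and [B] both leave the range and the
    kernel of [T] invariant, so they commute with the orthogonal projections
    [P = T T+] (onto the range) and [Q = T+ T] (along the kernel).  Then
    [d = T+ A x - A T+ x] satisfies [T d = P A x - A P x = 0] and [Q d = d],
    so [d = T+ T d = 0]. *)

Section LinearMaps.
Variables (K : pzRingType) (U : lmodType K).
Implicit Types (f g : U -> U).

Lemma linear_fun0 f : linear f -> f 0 = 0.
Proof.
by move=> linf; rewrite -[in LHS](subrr 0) (GRing.zmod_morphism_linear linf) subrr.
Qed.

Lemma linear_comp f g : linear f -> linear g -> linear (f \o g).
Proof. by move=> linf ling a x y /=; rewrite ling linf. Qed.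

Lemma linear_iter n f : linear f -> linear (iter n f).
Proof. by move=> linf; elim: n => [|n IHn] a x y //=; rewrite IHn linf. Qed.

End LinearMaps.

Section InnerProductSpace.
Variables (R : realType) (H : lmodType R[i]) (ip : H -> H -> R[i]).
Hypothesis ipP : inner_product_axioms ip.
Implicit Types (x y z : H) (A B E S T X Xs Y Ys : H -> H).

Lemma ipC x y : ip x y = (ip y x)^*.
Proof. by case: ipP. Qed.

Lemma ipBl x y z : ip (x - y) z = ip x z - ip y z.
Proof. by case: ipP => ipDl _ _ _; rewrite addrC -scaleN1r ipDl mulN1r addrC. Qed.

Lemma ip_inj_l x y : (forall z, ip x z = ip y z) -> x = y.
Proof.
case: ipP => _ _ _ ip_eq0 eq_ip; apply/eqP; rewrite -subr_eq0; apply/eqP.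
by apply: ip_eq0; rewrite ipBl eq_ip subrr.
Qed.

Lemma ip_inj_r x y : (forall z, ip z x = ip z y) -> x = y.
Proof. by move=> eq_ip; apply: ip_inj_l => z; rewrite ipC eq_ip -ipC. Qed.

Definition adjoint_pair A B := forall x y, ip (A x) y = ip x (B y).

Lemma adjoint_pairC A B : adjoint_pair A B -> adjoint_pair B A.
Proof. by move=> adjAB x y; rewrite ipC -adjAB -ipC. Qed.

Lemma adjoint_pair_iter n A B :
  adjoint_pair A B -> adjoint_pair (iter n A) (iter n B).
Proof.
move=> adjAB; elim: n => [|n IHn] x y //=.
by rewrite adjAB IHn -iterSr.
Qed.

Lemma adjoint_pair_commute X Xs Y Ys :
  adjoint_pair X Xs -> adjoint_pair Y Ys ->
  (forall x, X (Ys x) = Ys (X x)) -> forall x, Xs (Y x) = Y (Xs x).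
Proof.
move=> adjX adjY XYs w; have adjYs := adjoint_pairC adjY.
apply: ip_inj_r => z /=.
by rewrite -adjX -adjYs -XYs adjX adjYs.
Qed.

Lemma selfadjoint_commute_of_range_stable E X Xs :
  selfadjoint ip E -> adjoint_pair X Xs ->
  (forall x, E (X (E x)) = X (E x)) -> (forall x, E (Xs (E x)) = Xs (E x)) ->
  forall x, E (X x) = X (E x).
Proof.
move=> saE adjX EXE EXsE x; apply: ip_inj_l => y /=.
by rewrite saE adjX -EXsE -saE -adjX -saE EXE.
Qed.

Lemma selfadjoint_commute_of_kernel_stable E X Xs :
  linear E -> selfadjoint ip E -> (forall x, E (E x) = E x) ->
  linear X -> linear Xs -> adjoint_pair X Xs ->
  (forall k, E k = 0 -> E (X k) = 0) -> (forall k, E k = 0 -> E (Xs k) = 0) ->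
  forall x, E (X x) = X (E x).
Proof.
move=> linE saE idemE linX linXs adjX EX EXs.
have E_sub_proj x : E (x - E x) = 0.
  by rewrite (GRing.zmod_morphism_linear linE) idemE subrr.
have EF_proj F : linear F -> (forall k, E k = 0 -> E (F k) = 0) ->
    forall x, E (F x) = E (F (E x)).
  move=> linF EF x; apply/eqP; rewrite -subr_eq0.
  rewrite -(GRing.zmod_morphism_linear linE) -(GRing.zmod_morphism_linear linF).
  by rewrite EF ?E_sub_proj.
move=> x /=; rewrite (EF_proj X) //; apply: ip_inj_l => y.
by rewrite saE adjX saE -(EF_proj Xs) // -saE -adjX.
Qed.

Lemma MP_inverse_commute T S A B :
  linear T -> linear A -> linear B -> adjoint_pair A B ->
  is_MP_inverse ip T S ->
  (forall x, A (T x) = T (A x)) -> (forall x, B (T x) = T (B x)) ->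
  forall x, A (S x) = S (A x).
Proof.
move=> linT linA linB adjAB [[linS _] TST STS saQ saP] AT BT.
have {}TST x : T (S (T x)) = T x := TST x.
have {}STS x : S (T (S x)) = S x := STS x.
have subT := GRing.zmod_morphism_linear linT.
have subS := GRing.zmod_morphism_linear linS.
have PA x : T (S (A x)) = A (T (S x)).
  apply: (@selfadjoint_commute_of_range_stable (T \o S) A B) => // {}x /=.
    by rewrite AT TST.
  by rewrite BT TST.
have kerQ k : S (T k) = 0 -> T k = 0 by move=> Qk; rewrite -TST Qk linear_fun0.
have Q_stable C : linear C -> (forall x, C (T x) = T (C x)) ->
    forall k, S (T k) = 0 -> S (T (C k)) = 0.
  by move=> linC CT k /kerQ Tk; rewrite -CT Tk !linear_fun0.
have QA x : S (T (A x)) = A (S (T x)).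
  apply: (selfadjoint_commute_of_kernel_stable (linear_comp linS linT) saQ _
           linA linB adjAB).
  - by move=> y /=; rewrite STS.
  - exact: (Q_stable A).
  - exact: (Q_stable B).
move=> x; apply/eqP; rewrite eq_sym -subr_eq0; apply/eqP.
set d := S (A x) - A (S x).
have Td : T d = 0 by rewrite subT PA AT subrr.
have -> : d = S (T d) by rewrite subT subS STS QA STS.
by rewrite Td linear_fun0.
Qed.

End InnerProductSpace.

Theorem mainTheorem9 (R : realType) (H : lmodType R[i]) (ip : H -> H -> R[i])
    (hH : is_hilbert ip) (n : nat) (hn : (1 <= n)%N)
    (T Ts : H -> H) (hT : bounded_op ip T) (hTs : is_adjoint ip T Ts)
    (hnormal : n_normal n T Ts) (hcr : closed_range ip T) :
  n_EP ip n T.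
Proof.
split=> // S MP_S.
have [ipP _] := hH; have [linT _] := hT; have [[linTs _] adjT] := hTs.
have adjA : adjoint_pair ip (opow T n) (opow Ts n) by apply: adjoint_pair_iter.
apply: (MP_inverse_commute ipP linT (linear_iter n linT) (linear_iter n linTs)
         adjA MP_S).
- by move=> x; rewrite /opow /= -iterSr iterS.
- exact: (adjoint_pair_commute ipP adjA adjT hnormal).
Qed.
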